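(* Let $\varepsilon>0$, $\alpha=\varepsilon/(2M)$, $\lambda=2\alpha/(\alpha+\sqrt{\alpha^2+4L\alpha})$, and $y_0\in\mathrm{dom}\, h$. Run TAA: $s_0=\nabla f(y_0)$, $x_0=\mathrm{argmin}_x\{\langle s_0,x\rangle+h^\alpha(x)\}$, and for $k\ge0$: $\tilde x_{k+1}=(1-\lambda)y_k+\lambda x_k$, $s_{k+1}=(1-\lambda)s_k+\lambda\nabla f(\tilde x_{k+1})$, $x_{k+1}=\mathrm{argmin}_x\{\langle s_{k+1},x\rangle+h^\alpha(x)\}$, $y_{k+1}=(1-\lambda)y_k+\lambda x_{k+1}$. Let $\Gamma_k$ be the ACP model induced by $(y_0,\{\tilde x_{i+1}\}_{i=0}^{k-1},(\lambda,\dots,\lambda))$. Then $(y_k,\Gamma_k)$ is an $\varepsilon$-certificate for $\min_x\phi(x)$ after $k=\tilde{\mathcal{O}}(1+\sqrt{ML/\varepsilon})$ iterations.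
   Context: Let $\|\cdot\|$ be a norm on $\mathbb{R}^n$ with dual norm $\|\cdot\|_*$. Let $f:\mathbb{R}^n\to\mathbb{R}$ be convex, differentiable and $L$-smooth ($L>0$) with respect to $\|\cdot\|$, $h:\mathbb{R}^n\to(-\infty,\infty]$ closed proper convex with bounded domain, and $w:\mathbb{R}^n\to[0,+\infty]$ closed, $1$-strongly convex with respect to $\|\cdot\|$ on $\mathrm{dom}\, h$, with $M:=\max_{x\in\mathrm{dom}\, h}w(x)<\infty$. Let $\phi=f+h$, $h^\alpha=h+\alpha w$, $\phi^\alpha=f+h^\alpha$. Write $\ell_f(x;x_0)=f(x_0)+\langle\nabla f(x_0),x-x_0\rangle$. The ACP model induced by $(y_0,\{p_i\}_{i=0}^{k-1},\zeta)$, $\zeta\in[0,1]^k$, is defined by $\Gamma_0(x)=h^\alpha(x)+\ell_f(x;y_0)$, $\Gamma_{j+1}(x)=(1-\zeta_j)\Gamma_j(x)+\zeta_j(h^\alpha(x)+\ell_f(x;p_j))$. For $u\in\mathrm{dom}\, h$ and $\alpha\le\varepsilon/(2M)$, $(u,\Gamma_k)$ is an $\varepsilon$-certificate if $\phi^\alpha(u)-\min_{x\in\mathbb{R}^n}\Gamma_k(x)\le\varepsilon/2$. The notation $\tilde{\mathcal{O}}$ hides logarithmic factors (in $\varepsilon$ and the initial gap). *)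

From HB Require Import structures.
From mathcomp Require Import all_boot all_order all_algebra.
From mathcomp Require Import all_classical all_reals all_analysis.
Set Implicit Arguments. Unset Strict Implicit. Unset Printing Implicit Defensive.
Import Order.TTheory GRing.Theory Num.Def Num.Theory.
Import numFieldNormedType.Exports.
Local Open Scope classical_set_scope.
Local Open Scope ring_scope.

Section Defs.
Variables (R : realType) (n : nat).
Notation vec := 'rV[R]_n.

Definition inner (s x : vec) : R := \sum_(i < n) s 0 i * x 0 i.

Definition is_norm (nrm : vec -> R) : Prop :=
  [/\ forall x, nrm x = 0 -> x = 0,
      forall (a : R) x, nrm (a *: x) = `|a| * nrm x &
      forall x y, nrm (x + y) <= nrm x + nrm y].

Definition dual_norm (nrm : vec -> R) (s : vec) : R :=
  sup [set inner s x | x in [set x | nrm x <= 1]].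

Definition grad (f : vec -> R) (x : vec) : vec :=
  \row_(i < n) ('d f x (delta_mx 0 i : vec) : R).

Definition convex_fun (f : vec -> R) : Prop :=
  forall x y (t : R), 0 <= t <= 1 ->
    f (t *: x + (1 - t) *: y) <= t * f x + (1 - t) * f y.

Definition smooth_wrt (nrm : vec -> R) (L : R) (f : vec -> R) : Prop :=
  forall x y, dual_norm nrm (grad f x - grad f y) <= L * nrm (x - y).

Definition dom (h : vec -> \bar R) : set vec := [set x | h x < +oo]%E.

Definition closed_fun (h : vec -> \bar R) : Prop :=
  forall a : R, closed [set x | (h x <= a%:E)%E].

Definition proper_fun (h : vec -> \bar R) : Prop :=
  (forall x, (-oo < h x)%E) /\ exists x, (h x < +oo)%E.

Definition econvex_fun (h : vec -> \bar R) : Prop :=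
  forall x y (t : R), 0 < t < 1 ->
    (h (t *: x + (1 - t) *: y)%R <= t%:E * h x + (1 - t)%R%:E * h y)%E.

Definition bounded_wrt (nrm : vec -> R) (A : set vec) : Prop :=
  exists B : R, forall x, A x -> nrm x <= B.

Definition strongly_convex_on (nrm : vec -> R) (D : set vec) (w : vec -> \bar R) : Prop :=
  forall x y (t : R), D x -> D y -> 0 < t < 1 ->
    (w (t *: x + (1 - t) *: y)%R <=
       t%:E * w x + (1 - t)%R%:E * w y - (t * (1 - t) / 2 * nrm (x - y) ^+ 2)%:E)%E.

Definition halpha (h w : vec -> \bar R) (alpha : R) (x : vec) : \bar R :=
  (h x + alpha%:E * w x)%E.

Definition lin (f : vec -> R) (x0 x : vec) : R := f x0 + inner (grad f x0) (x - x0).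

Fixpoint acp (f : vec -> R) (h w : vec -> \bar R) (alpha : R) (y0 : vec)
    (p : nat -> vec) (zeta : nat -> R) (k : nat) (x : vec) : \bar R :=
  match k with
  | 0 => (halpha h w alpha x + (lin f y0 x)%:E)%E
  | j.+1 => ((1 - zeta j)%R%:E * acp f h w alpha y0 p zeta j x
             + (zeta j)%:E * (halpha h w alpha x + (lin f (p j) x)%:E))%E
  end.

Definition model_min (G : vec -> \bar R) : \bar R := ereal_inf (range G).

Definition eps_certificate (f : vec -> R) (h w : vec -> \bar R) (M alpha eps : R)
    (u : vec) (G : vec -> \bar R) : Prop :=
  [/\ dom h u, alpha <= eps / (2 * M) &
      ((f u)%:E + halpha h w alpha u - model_min G <= (eps / 2)%:E)%E].

End Defs.

(* Along TAA the ACP model keeps the form [Gamma k = h^alpha + c_k + <s k, .>],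
   so it is minimized at [x k], and the gap [D k = phi^alpha (y k) - min Gamma k]
   contracts by [1 - lambda] at each step.  Indeed
   [y k.+1 = xt k.+1 + lambda (x k.+1 - x k)]: the descent lemma at [xt k.+1]
   costs [L/2 lambda^2 ||x k.+1 - x k||^2], convexity of [f] and of [h^alpha]
   handle the remaining terms, and the [alpha]-strong convexity of [Gamma k]
   around its minimizer [x k] gains [(1 - lambda) alpha/2 ||x k.+1 - x k||^2],
   the same amount since [L lambda^2 = alpha (1 - lambda)].  As
   [lambda >= 1 / (2 (1 + sqrt (M L / eps)))], [(1 - lambda)^k <= exp (- lambda k)]
   brings [D k] below [eps / 2] after
   [2 (1 + sqrt (M L / eps)) (1 + ln (1 + D 0 / eps))] iterations. *)

From HB Require Import structures.
From mathcomp Require Import all_boot all_order all_algebra.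
From mathcomp Require Import all_classical all_reals all_analysis.
From mathcomp Require Import ring lra.
Import Order.TTheory GRing.Theory Num.Def Num.Theory.
Import numFieldNormedType.Exports.
Local Open Scope classical_set_scope.
Local Open Scope ring_scope.
Set Implicit Arguments. Unset Strict Implicit. Unset Printing Implicit Defensive.

Section InnerProduct.
Variables (R : realType) (n : nat).
Implicit Types (s t u v : 'rV[R]_n) (a : R).

Lemma innerDl s t u : inner (s + t) u = inner s u + inner t u.
Proof. by rewrite /inner -big_split; apply: eq_bigr => i _; rewrite mxE mulrDl. Qed.

Lemma innerZl a s u : inner (a *: s) u = a * inner s u.
Proof. by rewrite /inner mulr_sumr; apply: eq_bigr => i _; rewrite mxE mulrA. Qed.

Lemma innerBl s t u : inner (s - t) u = inner s u - inner t u.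
Proof. by rewrite innerDl -scaleN1r innerZl mulN1r. Qed.

Lemma innerDr s u v : inner s (u + v) = inner s u + inner s v.
Proof. by rewrite /inner -big_split; apply: eq_bigr => i _; rewrite mxE mulrDr. Qed.

Lemma innerZr a s u : inner s (a *: u) = a * inner s u.
Proof. by rewrite /inner mulr_sumr; apply: eq_bigr => i _; rewrite mxE mulrCA. Qed.

Lemma innerBr s u v : inner s (u - v) = inner s u - inner s v.
Proof. by rewrite innerDr -scaleN1r innerZr mulN1r. Qed.

Lemma inner0r s : inner s 0 = 0.
Proof. by rewrite /inner big1 // => i _; rewrite mxE mulr0. Qed.

Lemma diff_grad (f : 'rV[R]_n -> R) u v : 'd f u v = inner (grad f u) v.
Proof.
rewrite {1}(row_sum_delta v) linear_sum /inner; apply: eq_bigr => i _.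
by rewrite linearZ /= /grad mxE mulrC.
Qed.

Lemma coord_le_normr (u : 'rV[R]_n) i : `|u 0 i| <= `|u|.
Proof.
have /mapP[j Hj ->] : `|u 0 i| \in [seq `|u k.1 k.2| | k : 'I_1 * 'I_n].
  by apply/mapP; exists (0, i) => //=; rewrite mem_enum.
rewrite [leRHS]/normr /= mx_normrE; apply/bigmax_geP; right => /=.
by exists j.
Qed.

End InnerProduct.

Section Norm.
Variables (R : realType) (n : nat) (nrm : 'rV[R]_n -> R).
Hypothesis nrmP : is_norm nrm.
Implicit Types (s u v : 'rV[R]_n).

Lemma nrm_eq0 u : nrm u = 0 -> u = 0.
Proof. by case: nrmP => nrm_eq0 _ _; exact: nrm_eq0. Qed.

Lemma nrmZ a u : nrm (a *: u) = `|a| * nrm u.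
Proof. by case: nrmP => _ nrmZ _; exact: nrmZ. Qed.

Lemma nrmD u v : nrm (u + v) <= nrm u + nrm v.
Proof. by case: nrmP => _ _ nrmD; exact: nrmD. Qed.

Lemma nrm0 : nrm 0 = 0.
Proof. by rewrite -(scale0r (0 : 'rV_n)) nrmZ normr0 mul0r. Qed.

Lemma nrmN u : nrm (- u) = nrm u.
Proof. by rewrite -scaleN1r nrmZ normrN normr1 mul1r. Qed.

Lemma nrm_distC u v : nrm (u - v) = nrm (v - u).
Proof. by rewrite -nrmN opprB. Qed.

Lemma nrm_ge0 u : 0 <= nrm u.
Proof. by have := nrmD u (- u); rewrite subrr nrm0 nrmN; lra. Qed.

Lemma nrm_sum I (r : seq I) (P : pred I) (F : I -> 'rV[R]_n) :
  nrm (\sum_(i <- r | P i) F i) <= \sum_(i <- r | P i) nrm (F i).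
Proof.
elim/big_ind2 : _ => [|a1 a2 b1 b2 h1 h2|//]; first by rewrite nrm0.
exact: le_trans (nrmD _ _) (lerD h1 h2).
Qed.

Lemma nrm_le_normr : exists2 K, 0 <= K & forall u, nrm u <= K * `|u|.
Proof.
exists (\sum_(i < n) nrm (delta_mx 0 i)) => [|u].
  by apply: sumr_ge0 => i _; exact: nrm_ge0.
rewrite {1}(row_sum_delta u) mulr_suml; apply: le_trans (nrm_sum _ _ _) _.
apply: ler_sum => i _.
by rewrite nrmZ mulrC ler_wpM2l ?nrm_ge0 ?coord_le_normr.
Qed.

Lemma nrm_continuous : continuous nrm.
Proof.
have [K K0 nrmK] := nrm_le_normr.
have lipK u v : `|nrm u - nrm v| <= (K + 1) * `|u - v|.
  apply: le_trans (_ : K * `|u - v| <= _); last by rewrite ler_wpM2r ?normr_ge0 //; lra.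
  apply: le_trans (nrmK (u - v)); rewrite ler_norml.
  have := nrmD u (v - u); have := nrmD (u - v) v.
  by rewrite addrNK (addrC u (v - u)) addrNK (nrm_distC v u); lra.
move=> u; apply/(@cvgrPdist_lt _ _ _ (nbhs u) (nbhs_filter u)) => e e0.
have : \forall v \near u, `|u - v| < e / (K + 1).
  apply: (@cvgr_dist_lt _ _ _ (nbhs u) (nbhs_filter u) id u) => //.
  by apply: divr_gt0 => //; lra.
apply: filterS => v; rewrite ltr_pdivlMr; last by lra.
by move=> uv; apply: le_lt_trans (lipK u v) _; rewrite mulrC.
Qed.

(* Equivalence of norms: minimize [nrm] on the compact unit sphere of the max norm. *)
Lemma normr_le_nrm : exists2 c, 0 < c & forall u, `|u| <= c * nrm u.
Proof.
pose S := [set u : 'rV[R]_n | `|u| = 1].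
have normalize u : u != 0 -> S (`|u|^-1 *: u).
  by move=> u0; rewrite /S /= normrZ normfV normr_id mulVf // normr_eq0.
have [[u0 Su0]|S0] := pselect (S !=set0); last first.
  exists 1 => // u; rewrite mul1r.
  have [->|u0] := eqVneq u 0; first by rewrite normr0 nrm_ge0.
  by exfalso; apply: S0; exists (`|u|^-1 *: u); exact: normalize.
have cS : compact S.
  apply: bounded_closed_compact.
    rewrite /bounded_set /bounded_near /=; near=> M => u; rewrite /S /= => ->.
    by near: M; apply: nbhs_pinfty_ge; rewrite num_real.
  apply: (@preimage_closed _ _ (@normr _ 'rV[R]_n) [set 1]); last exact: closed_eq.
  by move=> v _; exact: norm_continuous.
have cnrm : {within S, continuous nrm}.
  by apply: continuous_subspaceT; exact: nrm_continuous.
have [c Sc cmin] := EVT_min_rV (ex_intro _ u0 Su0) cS cnrm.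
rewrite inE /S /= in Sc.
have c0 : 0 < nrm c.
  rewrite lt0r nrm_ge0 andbT; apply/eqP => /nrm_eq0 c0.
  by move: Sc; rewrite c0 normr0 => /eqP; rewrite eq_sym oner_eq0.
exists (nrm c)^-1 => [|u]; first by rewrite invr_gt0.
have [->|u0'] := eqVneq u 0; first by rewrite normr0 nrm0 mulr0.
have nu : 0 < `|u| by rewrite normr_gt0.
have := cmin (`|u|^-1 *: u); rewrite inE nrmZ normfV normr_id.
move=> /(_ (normalize _ u0')) cmin_u.
by rewrite ler_pdivlMl // mulrC -ler_pdivlMl.
Unshelve. all: by end_near.
Qed.

(* [dual_norm nrm s] is a [sup], so it bounds [inner s] on the unit ball only once
   that set is known to be bounded above, which equivalence of norms provides. *)
Lemma inner_le_dual_norm s u : inner s u <= dual_norm nrm s * nrm u.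
Proof.
have [c c0 normc] := normr_le_nrm.
set C := (\sum_(i < n) `|s 0 i|) * c.
have innerC v : inner s v <= C * nrm v.
  apply: (@le_trans _ _ (\sum_(i < n) `|s 0 i| * `|v|)).
    apply: ler_sum => i _; apply: le_trans (ler_norm _) _.
    by rewrite normrM ler_wpM2l ?coord_le_normr.
  by rewrite -mulr_suml /C -mulrA ler_wpM2l ?sumr_ge0.
set E := [set inner s v | v in [set v | nrm v <= 1]].
have supE : has_sup E.
  split; first by exists (inner s 0), 0 => //=; rewrite nrm0.
  exists `|C| => _ [v /= v1 <-]; apply: le_trans (innerC v) _.
  apply: le_trans (_ : `|C| * nrm v <= _).
    by rewrite ler_wpM2r ?nrm_ge0 ?ler_norm.
  by rewrite -[leRHS]mulr1 ler_wpM2l.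
have [u0|un0] := eqVneq (nrm u) 0.
  by rewrite u0 mulr0 (nrm_eq0 u0) inner0r.
have up : 0 < nrm u by rewrite lt0r un0 nrm_ge0.
have : E (inner s ((nrm u)^-1 *: u)).
  exists ((nrm u)^-1 *: u) => //=.
  by rewrite nrmZ ger0_norm ?invr_ge0 ?nrm_ge0 // mulVf.
by move=> /(sup_upper_bound supE); rewrite innerZr ler_pdivrMl // mulrC.
Qed.

End Norm.

Lemma ler_of_vanishing_slack (R : realType) (a b K : R) : 0 <= K ->
  (forall t, 0 < t < 1 -> a <= b + t * K) -> a <= b.
Proof.
move=> K0 slack; apply/ler_addgt0Pr => e e0.
have p : 0 < K + 1 + e by lra.
have t01 : 0 < e / (K + 1 + e) < 1.
  by rewrite divr_gt0 //= ltr_pdivrMr // mul1r; lra.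
apply: le_trans (slack _ t01) _; rewrite lerD2l mulrC mulrA ler_pdivrMr //.
nra.
Qed.

Lemma mvt_sub_quadratic (R : realType) (g dg : R -> R) (a b : R) :
  (forall t : R, is_derive t (1 : R) g (dg t)) ->
  exists2 c, 0 < c < 1 & g 1 - g 0 - a - b = dg c - a - b * (c + c).
Proof.
move=> g_dg.
have derivative (t : R) : is_derive t (1 : R)
    (fun s => g s - (s * a + b * (s * s))) (dg t - (a + b * (t + t))).
  have g_dg_t := g_dg t; apply: is_derive_eq.
  by rewrite scaler0 add0r /GRing.scale /= !mulr1.
have cont : {within `[0, 1], continuous (fun s => g s - (s * a + b * (s * s)))}.
  apply: derivable_within_continuous => t _.
  exact: (@ex_derive _ _ _ _ _ _ _ (derivative t)).
have [c c01 mvt] := MVT ltr01 (fun t _ => derivative t) cont.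
exists c; first by move: c01; rewrite in_itv.
by move: mvt; rewrite !(mulr1, mul1r, mulr0, mul0r, subr0, addr0); lra.
Qed.

Section Smooth.
Variables (R : realType) (n : nat) (nrm f : 'rV[R]_n -> R) (L : R).
Hypothesis nrmP : is_norm nrm.
Hypothesis f_diff : forall z, differentiable f z.
Hypothesis f_smooth : smooth_wrt nrm L f.
Hypothesis L_ge0 : 0 <= L.
Implicit Types (u d : 'rV[R]_n).

Lemma is_derive_along_line u d (t : R) :
  is_derive t (1 : R) (fun s => f (s *: d + u)) (inner (grad f (t *: d + u)) d).
Proof.
have E : (fun h : R => h^-1 *: (((fun s => f (s *: d + u)) \o shift t) (h *: 1)
            - f (t *: d + u))) =
         (fun h : R => h^-1 *: ((f \o shift (t *: d + u)) (h *: d) - f (t *: d + u))).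
  apply/funext => h /=; congr (_ *: (f _ - _)).
  by rewrite scalerDl addrA [h *: 1]mulr1.
split; first by rewrite /derivable E; exact: diff_derivable.
by rewrite /derive E -/(derive f _ d) deriveE // diff_grad.
Qed.

Lemma inner_grad_sub_le a b d :
  inner (grad f a) d - inner (grad f b) d <= L * nrm (a - b) * nrm d.
Proof.
rewrite -innerBl; apply: le_trans (inner_le_dual_norm nrmP _ _) _.
by rewrite ler_wpM2r ?(nrm_ge0 nrmP) //; exact: f_smooth.
Qed.

Lemma grad_diff_le u d (t : R) : 0 < t ->
  `|inner (grad f (t *: d + u)) d - inner (grad f u) d| <= L * t * nrm d ^+ 2.
Proof.
move=> t0; have dist : nrm (t *: d + u - u) = t * nrm d.
  by rewrite addrK (nrmZ nrmP) gtr0_norm.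
rewrite ler_norml lerNl opprB; apply/andP; split.
  apply: le_trans (inner_grad_sub_le _ _ _) _.
  by rewrite (nrm_distC nrmP) dist mulrA expr2 mulrA.
apply: le_trans (inner_grad_sub_le _ _ _) _.
by rewrite dist mulrA expr2 mulrA.
Qed.

(* The mean value theorem applied to [t |-> f (t d + u) - t <grad f u, d> - b t^2]
   for [b = +/- L/2 ||d||^2]. *)
Lemma smooth_taylor u d :
  `|f (d + u) - f u - inner (grad f u) d| <= L / 2 * nrm d ^+ 2.
Proof.
set b := L / 2 * nrm d ^+ 2.
have mvt b' : exists2 c, 0 < c &
    f (d + u) - f u - inner (grad f u) d - b' =
    inner (grad f (c *: d + u)) d - inner (grad f u) d - b' * (c + c).
  have [c /andP[c0 _]] :=
    mvt_sub_quadratic (inner (grad f u) d) b' (is_derive_along_line u d).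
  by rewrite scale1r scale0r add0r; exists c.
have grad_le c : 0 < c ->
    `|inner (grad f (c *: d + u)) d - inner (grad f u) d| <= b * (c + c).
  move=> c0; rewrite (_ : b * (c + c) = L * c * nrm d ^+ 2); first exact: grad_diff_le.
  by rewrite /b; field.
rewrite ler_norml; apply/andP; split.
- have [c c0 E] := mvt (- b).
  rewrite -subr_ge0 E subr_ge0 mulNr.
  by have := grad_le c c0; rewrite ler_norml => /andP[].
- have [c c0 E] := mvt b.
  rewrite -subr_le0 E subr_le0.
  by have := grad_le c c0; rewrite ler_norml => /andP[].
Qed.

Hypothesis f_convex : convex_fun f.

(* Convexity along [u + t (z - u)] against the lower Taylor bound at [u], then
   [t -> 0]. *)
Lemma convex_lin_le u z : lin f u z <= f z.
Proof.
rewrite /lin; set a := inner (grad f u) (z - u); set N := nrm (z - u).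
suff slack t : 0 < t < 1 -> a <= f z - f u + t * (L / 2 * N ^+ 2).
  rewrite -lerBrDl; apply: ler_of_vanishing_slack slack.
  by rewrite mulr_ge0 ?divr_ge0 ?exprn_ge0 ?(nrm_ge0 nrmP).
move=> /andP[t0 t1].
have taylor := smooth_taylor u (t *: (z - u)).
have conv : f (t *: z + (1 - t) *: u) <= t * f z + (1 - t) * f u.
  by apply: f_convex; rewrite !ltW.
have E : t *: (z - u) + u = t *: z + (1 - t) *: u.
  by apply/rowP => i; rewrite !mxE; ring.
rewrite E innerZr (nrmZ nrmP) (gtr0_norm t0) -/a -/N ler_norml in taylor.
case/andP: taylor => taylor _; rewrite -(ler_pM2l t0).
nra.
Qed.

End Smooth.

Section StepSize.
Variables (R : realType) (M L eps : R).
Hypotheses (M_gt0 : 0 < M) (L_gt0 : 0 < L) (eps_gt0 : 0 < eps).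

Let alpha := eps / (2 * M).
Let S := Num.sqrt (alpha ^+ 2 + 4 * L * alpha).
Let lambda := 2 * alpha / (alpha + S).

Lemma taa_alpha_gt0 : 0 < alpha.
Proof. by rewrite divr_gt0 // mulr_gt0. Qed.

Let S_sqr : S ^+ 2 = alpha ^+ 2 + 4 * L * alpha.
Proof.
rewrite sqr_sqrtr // addr_ge0 ?sqr_ge0 //.
by rewrite mulr_ge0 ?ltW ?taa_alpha_gt0 // mulr_gt0.
Qed.

Let alpha_lt_S : alpha < S.
Proof.
have a0 := taa_alpha_gt0; have := sqrtr_ge0 (alpha ^+ 2 + 4 * L * alpha).
rewrite -/S => S0; have : alpha ^+ 2 < S ^+ 2.
  by rewrite S_sqr ltrDl; do 2 apply: mulr_gt0 => //.
nra.
Qed.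

Let lambda_mul : lambda * (alpha + S) = 2 * alpha.
Proof.
have aS : 0 < alpha + S by have := taa_alpha_gt0; have := alpha_lt_S; lra.
by rewrite /lambda mulrAC -mulrA mulfV ?mulr1 // gt_eqF.
Qed.

Lemma taa_lambda_gt0 : 0 < lambda.
Proof. by rewrite divr_gt0 //; have := taa_alpha_gt0; have := alpha_lt_S; lra. Qed.

Lemma taa_lambda_lt1 : lambda < 1.
Proof.
have := taa_alpha_gt0; have := alpha_lt_S => aS a0.
by rewrite /lambda ltr_pdivrMr ?mul1r; lra.
Qed.

(* [lambda] is the root in (0, 1) of [L x^2 + alpha x - alpha]. *)
Lemma taa_lambda_sqr : L * lambda ^+ 2 = alpha * (1 - lambda).
Proof.
have a0 := taa_alpha_gt0.
have lS : lambda * S = 2 * alpha - lambda * alpha.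
  by have := lambda_mul; rewrite mulrDr; lra.
have : (lambda * S) ^+ 2 = lambda ^+ 2 * (alpha ^+ 2 + 4 * L * alpha).
  by rewrite exprMn S_sqr.
rewrite lS => sq; apply: (mulfI (x := 4 * alpha)); first by rewrite gt_eqF //; lra.
by move: sq; rewrite !expr2; nra.
Qed.

(* [S = alpha sqrt (1 + 8 q^2) <= alpha (1 + 3 q)] with [q = sqrt (M L / eps)],
   hence [lambda >= 2 / (2 + 3 q)]. *)
Lemma taa_lambda_ge : 1 <= lambda * (2 * (1 + Num.sqrt (M * L / eps))).
Proof.
have a0 := taa_alpha_gt0.
set q := Num.sqrt _; have q0 : 0 <= q := sqrtr_ge0 _.
have qq : alpha * q ^+ 2 = L / 2.
  rewrite sqr_sqrtr ?divr_ge0 ?mulr_ge0 ?ltW // /alpha.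
  by field; rewrite !gt_eqF.
have S_le : S <= alpha * (1 + 3 * q).
  have : 0 <= alpha ^+ 2 * q by rewrite mulr_ge0 ?sqr_ge0.
  have : 0 <= alpha * (1 + 3 * q) by rewrite mulr_ge0 //; lra.
  have : S ^+ 2 = alpha ^+ 2 + 8 * alpha * (alpha * q ^+ 2).
    by rewrite S_sqr qq; field.
  have := sqrtr_ge0 (alpha ^+ 2 + 4 * L * alpha); rewrite -/S.
  nra.
by have := lambda_mul; have := taa_lambda_gt0; nra.
Qed.

End StepSize.

Lemma one_sub_expn_le_expR (R : realType) (x : R) (k : nat) : x <= 1 ->
  (1 - x) ^+ k <= expR (- (x * k%:R)).
Proof.
move=> x1; rewrite -mulNr expRM_natr; apply: lerXn2r.
- by rewrite nnegrE subr_ge0.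
- by rewrite nnegrE ltW ?expR_gt0.
- by have := expR_ge1Dx (- x); rewrite addrC.
Qed.

(* With [T >= 1 / lambda], after [T (1 + ln (1 + D0 / eps))] steps the factor
   [(1 - lambda) ^ k <= exp (-1) / (1 + D0 / eps)] brings [D0] below [eps / 2]. *)
Lemma geometric_decay_le (R : realType) (lambda eps D0 T : R) (k : nat) :
  0 < lambda -> lambda < 1 -> 0 < eps -> 0 <= D0 -> 1 <= lambda * T ->
  T * (1 + ln (1 + D0 / eps)) <= k%:R ->
  (1 - lambda) ^+ k * D0 <= eps / 2.
Proof.
move=> l0 l1 e0 D0_ge0 lT Tk.
set u := D0 / eps; have u0 : 0 <= u by rewrite divr_ge0 // ltW.
set l := ln (1 + u); have l0' : 0 <= l by rewrite ln_ge0 //; lra.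
rewrite -/u -/l in Tk.
have steps : 1 + l <= lambda * k%:R.
  apply: le_trans (_ : lambda * (T * (1 + l)) <= _); last by rewrite ler_wpM2l // ltW.
  by rewrite mulrA -[leLHS]mul1r ler_wpM2r //; lra.
have decay : (1 - lambda) ^+ k <= expR (- 1) * expR (- l).
  apply: le_trans (one_sub_expn_le_expR _ (ltW l1)) _.
  by rewrite -expRD ler_expR -opprD lerN2.
have exp_l : expR (- l) * (1 + u) = 1.
  by rewrite expRN lnK ?mulVf ?gt_eqF ?posrE //; lra.
have exp1 : expR (- 1) * 2 <= 1 :> R.
  rewrite expRN ler_pdivrMl ?expR_gt0 // mulr1.
  by have := expR_ge1Dx (1 : R); lra.
apply: le_trans (ler_wpM2r D0_ge0 decay) _.
rewrite (_ : D0 = u * eps); last by rewrite /u divfK // gt_eqF.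
have := expR_gt0 (- l); have := expR_gt0 (- 1 : R).
move: exp_l exp1; generalize (expR (- l)) (expR (- 1 : R)) => X E Xu E2 E0 X0.
have EXu : E * (X * u) <= 1 / 2 by nra.
rewrite (_ : E * X * (u * eps) = E * (X * u) * eps); last by ring.
by apply: le_trans (ler_wpM2r (ltW e0) EXu) _; lra.
Qed.

Section Regularizer.
Variables (R : realType) (n : nat) (nrm : 'rV[R]_n -> R).
Variables (h w : 'rV[R]_n -> \bar R) (M alpha : R).
Hypothesis h_proper : proper_fun h.
Hypothesis h_convex : econvex_fun h.
Hypothesis w_ge0 : forall z, (0 <= w z)%E.
Hypothesis w_sconvex : strongly_convex_on nrm (dom h) w.
Hypothesis w_le_M : forall z, dom h z -> (w z <= M%:E)%E.
Hypothesis alpha_gt0 : 0 < alpha.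
Implicit Types (u v z : 'rV[R]_n).

Definition halphar z := fine (h z) + alpha * fine (w z).

Lemma h_fin z : dom h z -> h z = (fine (h z))%:E.
Proof.
case: h_proper => /(_ z) + _; rewrite /dom /=.
by case: (h z).
Qed.

Lemma w_fin z : dom h z -> w z = (fine (w z))%:E.
Proof.
move=> /w_le_M; have := w_ge0 z.
by case: (w z).
Qed.

Lemma halpha_dom z : dom h z -> halpha h w alpha z = (halphar z)%:E.
Proof. by move=> dz; rewrite /halpha h_fin // w_fin // -EFinM -EFinD. Qed.

Lemma halpha_ndom z : ~ dom h z -> halpha h w alpha z = +oo%E.
Proof.
move=> nd; have hz : h z = +oo%E.
  move: nd; rewrite /dom /=; case: h_proper => /(_ z).
  by case: (h z) => //= r _ []; rewrite ltry.
have wz : (0 <= alpha%:E * w z)%E.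
  by apply: mule_ge0; [rewrite lee_fin ltW | exact: w_ge0].
rewrite /halpha hz addye //.
by apply/eqP => wz_oo; rewrite wz_oo in wz.
Qed.

Lemma dom_convex u v t : dom h u -> dom h v -> 0 < t < 1 ->
  dom h (t *: u + (1 - t) *: v).
Proof.
move=> du dv t01; apply: le_lt_trans (h_convex u v t01) _.
by rewrite h_fin // (h_fin dv) -!EFinM -EFinD ltry.
Qed.

Lemma halphar_sconvex u v t : dom h u -> dom h v -> 0 < t < 1 ->
  halphar (t *: u + (1 - t) *: v) <=
  t * halphar u + (1 - t) * halphar v - alpha * (t * (1 - t) / 2 * nrm (u - v) ^+ 2).
Proof.
move=> du dv t01; have dt := dom_convex du dv t01.
have hc := h_convex u v t01; have wc := w_sconvex du dv t01.
rewrite h_fin // (h_fin du) (h_fin dv) -!EFinM -EFinD lee_fin in hc.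
rewrite w_fin // (w_fin du) (w_fin dv) -!EFinM -EFinD lee_fin in wc.
have := ler_wpM2l (ltW alpha_gt0) wc.
rewrite /halphar; lra.
Qed.

Lemma halphar_convex u v t : dom h u -> dom h v -> 0 < t < 1 ->
  halphar (t *: u + (1 - t) *: v) <= t * halphar u + (1 - t) * halphar v.
Proof.
move=> du dv t01; apply: le_trans (halphar_sconvex du dv t01) _.
rewrite lerBlDr lerDl; case/andP: t01 => t0 t1.
apply: mulr_ge0; first exact: ltW.
apply: mulr_ge0; last exact: sqr_ge0.
by apply: divr_ge0 => //; apply: mulr_ge0; [exact: ltW | rewrite subr_ge0 ltW].
Qed.

End Regularizer.

Section TAA.
Variables (R : realType) (n : nat) (nrm f : 'rV[R]_n -> R) (L : R).
Variables (h w : 'rV[R]_n -> \bar R) (M alpha lambda : R).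
Variables (y0 : 'rV[R]_n) (x xt y s : nat -> 'rV[R]_n).
Hypothesis nrmP : is_norm nrm.
Hypothesis f_diff : forall z, differentiable f z.
Hypothesis f_convex : convex_fun f.
Hypothesis L_ge0 : 0 <= L.
Hypothesis f_smooth : smooth_wrt nrm L f.
Hypothesis h_proper : proper_fun h.
Hypothesis h_convex : econvex_fun h.
Hypothesis w_ge0 : forall z, (0 <= w z)%E.
Hypothesis w_sconvex : strongly_convex_on nrm (dom h) w.
Hypothesis w_le_M : forall z, dom h z -> (w z <= M%:E)%E.
Hypothesis alpha_gt0 : 0 < alpha.
Hypothesis lambda_gt0 : 0 < lambda.
Hypothesis lambda_lt1 : lambda < 1.
Hypothesis lambda_sqr : L * lambda ^+ 2 = alpha * (1 - lambda).
Hypothesis y0_dom : dom h y0.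
Hypothesis y_0 : y 0%N = y0.
Hypothesis s_0 : s 0%N = grad f y0.
Hypothesis x_argmin : forall k z, ((inner (s k) (x k))%:E + halpha h w alpha (x k)
  <= (inner (s k) z)%:E + halpha h w alpha z)%E.
Hypothesis xt_succ : forall k, xt k.+1 = (1 - lambda) *: y k + lambda *: x k.
Hypothesis s_succ : forall k, s k.+1 = (1 - lambda) *: s k + lambda *: grad f (xt k.+1).
Hypothesis y_succ : forall k, y k.+1 = (1 - lambda) *: y k + lambda *: x k.+1.

Local Notation ha := (halphar h w alpha).
Local Notation Gamma := (acp f h w alpha y0 (fun i => xt i.+1) (fun=> lambda)).

Let halphaE := @halpha_dom _ _ h w M alpha h_proper w_ge0 w_le_M.
Let halpha_oo := @halpha_ndom _ _ h w alpha h_proper w_ge0 alpha_gt0.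
Let dom_conv := dom_convex h_proper h_convex.
Let ha_sconv := halphar_sconvex h_proper h_convex w_ge0 w_sconvex w_le_M alpha_gt0.
Let ha_conv := halphar_convex h_proper h_convex w_ge0 w_sconvex w_le_M alpha_gt0.

Let lambda01 : 0 < 1 - lambda < 1.
Proof. by rewrite subr_gt0 lambda_lt1 gtrBl lambda_gt0. Qed.

Let one_sub_lambda_ge0 : 0 <= 1 - lambda.
Proof. by rewrite subr_ge0 ltW. Qed.

Let one_sub_lambda : 1 - (1 - lambda) = lambda.
Proof. by rewrite opprB addrC addrNK. Qed.

Lemma x_dom k : dom h (x k).
Proof.
have [//|xk_ndom] := pselect (dom h (x k)).
case: h_proper => _ [z zdom]; have := x_argmin k z.
by rewrite halpha_oo // halphaE // addey // -EFinD leNgt ltey.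
Qed.

Lemma y_dom k : dom h (y k).
Proof.
elim: k => [|k IH]; first by rewrite y_0.
by have := dom_conv IH (x_dom k.+1) lambda01;
  rewrite one_sub_lambda -y_succ.
Qed.

Fixpoint model_const k : R :=
  if k is k'.+1 then
    (1 - lambda) * model_const k'
    + lambda * (f (xt k) - inner (grad f (xt k)) (xt k))
  else f y0 - inner (grad f y0) y0.

Definition model k z := ha z + (model_const k + inner (s k) z).

Lemma acpE k z :
  Gamma k z = (halpha h w alpha z + (model_const k + inner (s k) z)%:E)%E.
Proof.
elim: k => [|k IH] /=.
  by rewrite /lin s_0 innerBr; congr (_ + _)%E; congr EFin; ring.
rewrite IH; have [zdom|z_ndom] := pselect (dom h z).
  rewrite halphaE // -!EFinD; congr EFin.
  by rewrite /lin s_succ innerDl !innerZl innerBr; ring.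
by rewrite halpha_oo // !addye // !gt0_muley ?lte_fin ?subr_gt0 // addye.
Qed.

Lemma acp_dom k z : dom h z -> Gamma k z = (model k z)%:E.
Proof. by move=> zdom; rewrite acpE halphaE // -EFinD. Qed.

Lemma x_argmin_fin k z : dom h z ->
  inner (s k) (x k) + ha (x k) <= inner (s k) z + ha z.
Proof.
move=> zdom; have := x_argmin k z.
by rewrite (halphaE (x_dom k)) (halphaE zdom) -!EFinD lee_fin.
Qed.

Lemma model_minE k : model_min (Gamma k) = (model k (x k))%:E.
Proof.
apply/le_anti/andP; split.
  by rewrite -(acp_dom _ (x_dom k)); apply: ereal_inf_lbound; exists (x k).
apply: le_ereal_inf_tmp => _ [z _ <-].
have [zdom|z_ndom] := pselect (dom h z); last by rewrite acpE halpha_oo ?addye ?leey.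
by rewrite acp_dom // lee_fin /model; have := x_argmin_fin k zdom; lra.
Qed.

(* Strong convexity of [h^alpha] makes the model grow quadratically away from
   its minimizer: compare [x k] with the points [t z + (1 - t) x k], [t -> 0]. *)
Lemma model_quadratic_growth k z : dom h z ->
  model k (x k) + alpha / 2 * nrm (z - x k) ^+ 2 <= model k z.
Proof.
move=> zdom; rewrite /model.
set N := nrm (z - x k).
suff slack t : 0 < t < 1 ->
    inner (s k) (x k) + ha (x k) + alpha / 2 * N ^+ 2 <=
    inner (s k) z + ha z + t * (alpha / 2 * N ^+ 2).
  have : inner (s k) (x k) + ha (x k) + alpha / 2 * N ^+ 2 <= inner (s k) z + ha z.
    apply: ler_of_vanishing_slack slack.
    by rewrite mulr_ge0 ?divr_ge0 ?sqr_ge0 ?ltW.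
  lra.
move=> t01; case/andP: (t01) => t0 t1.
have argmin := x_argmin_fin k (dom_conv zdom (x_dom k) t01).
have conv := ha_sconv zdom (x_dom k) t01.
rewrite innerDr !innerZr -/N in argmin conv.
rewrite -(ler_pM2l t0).
nra.
Qed.

Lemma model_succ k z :
  model k.+1 z = (1 - lambda) * model k z + lambda * (ha z + lin f (xt k.+1) z).
Proof. by rewrite /model /= /lin s_succ innerDl !innerZl innerBr; ring. Qed.

Definition gap k := f (y k) + ha (y k) - model k (x k).

Lemma y_succ_xt k : y k.+1 = lambda *: (x k.+1 - x k) + xt k.+1.
Proof. by apply/rowP => i; rewrite y_succ xt_succ !mxE; ring. Qed.

(* Descent lemma at [xt k.+1] along [y k.+1 - xt k.+1 = lambda (x k.+1 - x k)],
   then convexity of [f] (at [y k]) and of [h^alpha]. *)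
Lemma objective_succ_le k :
  f (y k.+1) + ha (y k.+1) <= (1 - lambda) * (f (y k) + ha (y k))
    + lambda * (ha (x k.+1) + lin f (xt k.+1) (x k.+1))
    + L / 2 * (lambda * nrm (x k.+1 - x k)) ^+ 2.
Proof.
set p := xt k.+1; set g := grad f p.
have taylor := smooth_taylor nrmP f_diff f_smooth p (lambda *: (x k.+1 - x k)).
rewrite -y_succ_xt (nrmZ nrmP) (gtr0_norm lambda_gt0) ler_norml in taylor.
case/andP: taylor => _ taylor.
have split :
    lambda *: (x k.+1 - x k) = (1 - lambda) *: (y k - p) + lambda *: (x k.+1 - p).
  by apply/rowP => i; rewrite /p xt_succ !mxE; ring.
rewrite split innerDr !innerZr -/g in taylor.
have lin_y := ler_wpM2l one_sub_lambda_ge0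
  (convex_lin_le nrmP f_diff f_smooth L_ge0 f_convex p (y k)).
have conv := ha_conv (y_dom k) (x_dom k.+1) lambda01.
rewrite one_sub_lambda -y_succ in conv.
rewrite /lin -/g in lin_y *.
lra.
Qed.

Lemma model_succ_ge k :
  (1 - lambda) * (model k (x k) + alpha / 2 * nrm (x k.+1 - x k) ^+ 2)
    + lambda * (ha (x k.+1) + lin f (xt k.+1) (x k.+1)) <= model k.+1 (x k.+1).
Proof.
rewrite model_succ lerD2r; apply: ler_wpM2l => //.
exact: model_quadratic_growth (x_dom k.+1).
Qed.

Lemma gap_succ_le k : gap k.+1 <= (1 - lambda) * gap k.
Proof.
have := objective_succ_le k; have := model_succ_ge k.
have -> : L / 2 * (lambda * nrm (x k.+1 - x k)) ^+ 2 =
    (1 - lambda) * (alpha / 2 * nrm (x k.+1 - x k) ^+ 2).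
  transitivity (L * lambda ^+ 2 / 2 * nrm (x k.+1 - x k) ^+ 2); first by ring.
  by rewrite lambda_sqr; ring.
rewrite /gap; lra.
Qed.

Lemma gap_le k : gap k <= (1 - lambda) ^+ k * gap 0.
Proof.
elim: k => [|k IH]; first by rewrite expr0 mul1r.
apply: le_trans (gap_succ_le k) _.
by rewrite exprS -mulrA ler_wpM2l.
Qed.

Lemma gap0_ge0 : 0 <= gap 0.
Proof.
have := x_argmin_fin 0 y0_dom.
by rewrite /gap /model /= y_0 s_0; lra.
Qed.

Lemma certificate_gapE k :
  ((f (y k))%:E + halpha h w alpha (y k) - model_min (Gamma k))%E = (gap k)%:E.
Proof. by rewrite (halphaE (y_dom k)) model_minE -EFinD. Qed.

Theorem taa_certificate_gap k :
  let gap0 := fine ((f y0)%:E + halpha h w alpha y0 - model_min (Gamma 0))%E in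
  [/\ dom h (y k), 0 <= gap0 &
    ((f (y k))%:E + halpha h w alpha (y k) - model_min (Gamma k)
      <= ((1 - lambda) ^+ k * gap0)%:E)%E].
Proof.
move=> gap0; have gap0E := certificate_gapE 0; rewrite y_0 in gap0E.
rewrite /gap0 gap0E /= certificate_gapE lee_fin.
by split; [exact: y_dom | exact: gap0_ge0 | exact: gap_le].
Qed.

End TAA.

Theorem theorem5p1 :
  exists C : nat,
  forall (R : realType) (n : nat) (nrm : 'rV[R]_n -> R) (f : 'rV[R]_n -> R)
    (L : R) (h w : 'rV[R]_n -> \bar R) (M eps : R)
    (y0 : 'rV[R]_n) (x xt y s : nat -> 'rV[R]_n),
  is_norm nrm ->
  (forall z, differentiable f z) -> convex_fun f -> 0 < L -> smooth_wrt nrm L f ->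
  proper_fun h -> econvex_fun h -> closed_fun h -> bounded_wrt nrm (dom h) ->
  (forall z, (0 <= w z)%E) -> closed_fun w -> strongly_convex_on nrm (dom h) w ->
  0 < M -> (forall z, dom h z -> (w z <= M%:E)%E) ->
  (exists z, dom h z /\ w z = M%:E) ->
  0 < eps ->
  let alpha := eps / (2 * M) in
  let lambda := 2 * alpha / (alpha + Num.sqrt (alpha ^+ 2 + 4 * L * alpha)) in
  dom h y0 ->
  (* TAA iterates *)
  y 0%N = y0 ->
  s 0%N = grad f y0 ->
  (forall k z, ((inner (s k) (x k))%:E + halpha h w alpha (x k)
                <= (inner (s k) z)%:E + halpha h w alpha z)%E) ->
  (forall k, xt k.+1 = (1 - lambda) *: y k + lambda *: x k) ->
  (forall k, s k.+1 = (1 - lambda) *: s k + lambda *: grad f (xt k.+1)) ->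
  (forall k, y k.+1 = (1 - lambda) *: y k + lambda *: x k.+1) ->
  let Gamma := acp f h w alpha y0 (fun i => xt i.+1) (fun=> lambda) in
  let gap0 := fine ((f y0)%:E + halpha h w alpha y0 - model_min (Gamma 0%N))%E in
  forall k : nat,
    C%:R * (1 + Num.sqrt (M * L / eps)) * (1 + ln (1 + gap0 / eps)) <= k%:R ->
    eps_certificate f h w M alpha eps (y k) (Gamma k).
Proof.
(* Closedness of [h] and [w], boundedness of [dom h] and attainment of [M] only
   serve the existence of the minimizers [x k], which is assumed here. *)
exists 2%N => R n nrm f L h w M eps y0 x xt y s nrmP f_diff f_convex L_gt0 f_smooth
  h_proper h_convex _ _ w_ge0 _ w_sconvex M_gt0 w_le_M _ eps_gt0 alpha lambda
  y0_dom y_0 s_0 x_argmin xt_succ s_succ y_succ Gamma gap0 k k_large.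
have alpha_gt0 := taa_alpha_gt0 M_gt0 eps_gt0.
have lambda_gt0 := taa_lambda_gt0 M_gt0 L_gt0 eps_gt0.
have lambda_lt1 := taa_lambda_lt1 M_gt0 L_gt0 eps_gt0.
have [yk_dom gap0_ge0 gap_le] := taa_certificate_gap nrmP f_diff f_convex (ltW L_gt0)
  f_smooth h_proper h_convex w_ge0 w_sconvex w_le_M alpha_gt0 lambda_gt0 lambda_lt1
  (taa_lambda_sqr M_gt0 L_gt0 eps_gt0) y0_dom y_0 s_0 x_argmin xt_succ s_succ y_succ k.
split => //; apply: le_trans gap_le _; rewrite lee_fin.
exact: geometric_decay_le lambda_gt0 lambda_lt1 eps_gt0 gap0_ge0
  (taa_lambda_ge M_gt0 L_gt0 eps_gt0) k_large.
Qed.
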